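(* A game $\Gamma=(N,A,u)$ is standard symmetric if and only if there exist a matching $M$ of the strategy sets $(A_i)_{i\in N}$ and a transitive subgroup $H$ of $S_N$ such that for every $\pi\in H$ the induced game bijection $M_\pi$ is an automorphism of $\Gamma$.
   Context: A (finite normal-form) game $\Gamma=(N,A,u)$ consists of a finite set $N$ of $n\ge 2$ players, a finite non-empty strategy set $A_i$ for each $i\in N$ (all of the same cardinality), $A=\times_{i\in N}A_i$, and utility functions $u_i:A\to\mathbb{R}$. A game bijection $g=(\pi;(\tau_i)_{i\in N})$ of $\Gamma$ to itself consists of a permutation $\pi$ of $N$ and bijections $\tau_i:A_i\to A_{\pi(i)}$; $g.i=\pi(i)$, $g.s_i=\tau_i(s_i)$, and $g.s$ is the profile with $(g.s)_{\pi(i)}=\tau_i(s_i)$. An automorphism is a game bijection with $u_i(s)=u_{g.i}(g.s)$ for all $i,s$; $\operatorname{Aut}(\Gamma)$ is the group of automorphisms. A symmetry group is a subgroup $G\le\operatorname{Aut}(\Gamma)$; the stabiliser of player $i$ is $G_i=\{g\in G:g.i=i\}$. $G$ is player transitive if for all $i,j\in N$ some $g\in G$ has $g.i=j$; $G$ is strategy trivial if for every $i\in N$ and every $g\in G_i$, $g.s_i=s_i$ for all $s_i\in A_i$. $\Gamma$ is standard symmetric if it has a player transitive and strategy trivial symmetry group. A matching of $A_1,\dots,A_n$ is a set $M\subseteq\times_iA_i$ of $n$-tuples such that every element of every $A_i$ appears in exactly one tuple of $M$; it induces bijections $M_{ij}:A_i\to A_j$ sending $a_i$ to the $j$-th entry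 of the unique tuple containing $a_i$. For $\pi\in S_N$, $M_\pi$ denotes the game bijection $(\pi;(M_{i\pi(i)})_{i\in N})$. *)

From mathcomp Require Import all_boot all_fingroup.
From Stdlib Require Rdefinitions.
Set Implicit Arguments. Unset Strict Implicit. Unset Printing Implicit Defensive.

(* Encoding of game bijections: a game bijection g = (pi; (tau_i)_i) is
   encoded as the map on the disjoint union {i : N & A i} sending (i, a) to
   (pi i, tau_i a).  A map f on this disjoint union is a game bijection iff
   it is bijective and maps each fibre A i into a single fibre; then
   g.i = tag (f (i, a)) (for any a in A i) and (g.s)_{g.i} is the value of
   f at (i, s_i). *)

Section Games.
Variables (N : finType) (A : N -> finType).

Definition pts := {i : N & A i}.

Definition gpl (f : pts -> pts) (i : N) (a : A i) : N := tag (f (Tagged A a)).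

Definition is_gbij (f : pts -> pts) : Prop :=
  bijective f /\ (forall (i : N) (a b : A i), gpl f a = gpl f b).

Definition is_image (f : pts -> pts) (s t : forall j : N, A j) : Prop :=
  forall k : N, f (Tagged A (s k)) = Tagged A (t (gpl f (s k))).

Definition is_aut (u : forall i : N, (forall j : N, A j) -> Rdefinitions.R)
  (f : pts -> pts) : Prop :=
  is_gbij f /\
  forall (i : N) (s t : forall j : N, A j),
    is_image f s t -> u i s = u (gpl f (s i)) t.

Definition symmetry_group u (G : {group {perm pts}}) : Prop :=
  forall g, g \in G -> is_aut u g.

Definition player_transitive (G : {group {perm pts}}) : Prop :=
  forall i j : N, exists2 g, g \in G & forall a : A i, gpl g a = j.

Definition strategy_trivial (G : {group {perm pts}}) : Prop :=
  forall g, g \in G -> forall i : N, (forall a : A i, gpl g a = i) ->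
    forall a : A i, g (Tagged A a) = Tagged A a.

Definition standard_symmetric u : Prop :=
  exists G : {group {perm pts}},
    [/\ symmetry_group u G, player_transitive G & strategy_trivial G].

Definition is_matching (M : {set {dffun forall i : N, A i}}) : Prop :=
  forall (i : N) (a : A i), exists! m, m \in M /\ m i = a.

(* The game bijection M_pi = (pi; (M_{i,pi i})_i), encoded as above:
   (i, a) |-> (pi i, M_{i,pi i}(a)), where M_{ij}(a) is the j-th entry of the
   unique tuple of M containing a (the None branch is irrelevant when M is a
   matching). *)
Definition Mpi (M : {set {dffun forall i : N, A i}}) (pi : {perm N}) (x : pts) : pts :=
  let: existT i a := x in
  match [pick m in M | m i == a] with
  | Some m => Tagged A (m (pi i))
  | None => x
  end.
End Games.

From mathcomp Require Import all_boot all_fingroup.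
From Stdlib Require Rdefinitions.
From Stdlib Require Import FunctionalExtensionality.
Set Implicit Arguments. Unset Strict Implicit. Unset Printing Implicit Defensive.

(* Given a matching M, pi |-> M_pi is a group homomorphism from S_N into the
   game bijections, so the image of a transitive H whose elements act as
   automorphisms is a player-transitive symmetry group; an M_pi fixing a player
   fixes its strategies because M_pi only permutes the entries of each tuple.
   Conversely, let G be standard symmetric.  If g, h in G send player i to the
   same player, then g h^-1 stabilises i, hence is trivial on A_i: g and h agree
   on A_i.  So every G-orbit in the disjoint union of the A_i meets each A_j
   exactly once (at least once by transitivity), the orbits form a matching M,
   and every g in G is M_pi for the permutation pi it induces on the players. *)

Section Matchings.
Variables (N : finType) (A : N -> finType).
Variable M : {set {dffun forall i : N, A i}}.
Hypothesis matchingM : is_matching M.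

Lemma matching_cover (x : pts A) : exists2 m, m \in M & x = Tagged A (m (tag x)).
Proof.
by case: x => i a; have [m [[mM <-] _]] := matchingM a; exists m.
Qed.

Lemma Mpi_tuple (pi : {perm N}) m i :
  m \in M -> Mpi M pi (Tagged A (m i)) = Tagged A (m (pi i)).
Proof.
move=> mM; rewrite /Mpi /=; case: pickP => [m' /andP[m'M /eqP m'i] | no_m].
  have [m0 [_ uniq_m0]] := matchingM (m i).
  by rewrite -(uniq_m0 m' (conj m'M m'i)) -(uniq_m0 m (conj mM erefl)).
by have := no_m m; rewrite mM eqxx.
Qed.

Lemma Mpi_inj (pi : {perm N}) : injective (Mpi M pi).
Proof.
move=> x y; have [m mM ->] := matching_cover x; have [m' m'M ->] := matching_cover y.
rewrite !Mpi_tuple //; move: (tag x) (tag y) => i j eq_im.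
have eq_ij : i = j by apply: (@perm_inj _ pi); exact: (congr1 tag eq_im).
subst j; have [m0 [_ uniq_m0]] := matchingM (m (pi i)).
by rewrite -(uniq_m0 m (conj mM erefl)) -(uniq_m0 m' (conj m'M (esym (eq_from_Tagged eq_im)))).
Qed.

Definition matching_perm (pi : {perm N}) : {perm pts A} := perm (@Mpi_inj pi).

Lemma matching_permM : {morph matching_perm : p q / (p * q)%g}.
Proof.
move=> p q; apply/permP => x; rewrite permM !permE.
by have [m mM ->] := matching_cover x; rewrite !Mpi_tuple // permM.
Qed.

Canonical matching_perm_morphism := @Morphism _ _ setT _ (in2W matching_permM).

Lemma gpl_matching_perm (pi : {perm N}) i (a : A i) : gpl (matching_perm pi) a = pi i.
Proof.
by have [m [[mM <-] _]] := matchingM a; rewrite /gpl permE Mpi_tuple.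
Qed.

Lemma Mpi_fixed (pi : {perm N}) i (a : A i) :
  pi i = i -> Mpi M pi (Tagged A a) = Tagged A a.
Proof.
move=> pi_i; have [m [[mM <-] _]] := matchingM a.
by rewrite Mpi_tuple // pi_i.
Qed.

Lemma matching_standard_symmetric u (H : {group {perm N}}) :
  [transitive H, on [set: N] | 'P] ->
  (forall pi, pi \in H -> is_aut u (Mpi M pi)) -> standard_symmetric u.
Proof.
move=> trH autH; exists (matching_perm @* H)%G.
rewrite /symmetry_group /player_transitive /strategy_trivial /= morphimEsub ?subsetT //.
split.
- by move=> _ /imsetP[pi piH ->]; rewrite (functional_extensionality _ _ (permE _)); exact: autH.
- move=> i j; have [pi piH ->] := atransP2 trH (in_setT i) (in_setT j).
  by exists (matching_perm pi); [exact: imset_f | move=> a; rewrite gpl_matching_perm].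
- move=> _ /imsetP[pi piH ->] i fix_i a; rewrite permE Mpi_fixed //.
  by have := fix_i a; rewrite gpl_matching_perm.
Qed.

End Matchings.

Section OrbitMatching.
Variables (N : finType) (A : N -> finType).

Lemma gbij_tag (f : pts A -> pts A) (x y : pts A) :
  is_gbij f -> tag x = tag y -> tag (f x) = tag (f y).
Proof. by case: x y => i a [j b] [_ fibre_f] /= eq_ij; subst j; exact: fibre_f. Qed.

Definition induces (g : {perm pts A}) (pi : {perm N}) : bool :=
  [forall x, tag (g x) == pi (tag x)].

Variable G : {group {perm pts A}}.
Hypothesis gbijG : forall g, g \in G -> is_gbij g.
Hypothesis trG : player_transitive G.
Hypothesis stG : strategy_trivial G.

Lemma tag_perm_inj g (x y : pts A) : g \in G -> tag (g x) = tag (g y) -> tag x = tag y.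
Proof.
move=> gG; rewrite -{2}[x](permK g) -{2}[y](permK g).
by apply: gbij_tag; apply: gbijG; rewrite groupV.
Qed.

Lemma eq_on_fibre g h i (a b : A i) : g \in G -> h \in G ->
  tag (g (Tagged A a)) = tag (h (Tagged A a)) -> g (Tagged A b) = h (Tagged A b).
Proof.
move=> gG hG eq_gh; apply: (canRL (permKV h)); rewrite -permM.
(* [g * h^-1] stabilises player [i], so it is the identity on [A i]. *)
have ghG : (g * h^-1)%g \in G by rewrite groupM ?groupV.
apply: stG => // c; rewrite /gpl permM -[X in _ = X]/(tag (Tagged A a)) -(permK h (Tagged A a)).
apply: gbij_tag; first by apply: gbijG; rewrite groupV.
by rewrite -eq_gh; exact: gbij_tag (gbijG gG) _.
Qed.

Lemma orbit_fibre_inj (x y z : pts A) :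
  y \in orbit 'P G x -> z \in orbit 'P G x -> tag y = tag z -> y = z.
Proof.
case: x => i a /orbitP[g gG <-] /orbitP[h hG <-] /=.
by move=> eq_gh; exact: eq_on_fibre eq_gh.
Qed.

Lemma orbit_meets_fibre (x : pts A) j : exists b : A j, Tagged A b \in orbit 'P G x.
Proof.
case: x => i a; have [g gG to_j] := trG i j.
by exists (etagged (to_j a)); rewrite etaggedK; exact: mem_orbit.
Qed.

Definition orbit_matching : {set {dffun forall i : N, A i}} :=
  [set m : {dffun forall i : N, A i} |
    [forall j, forall k, Tagged A (m k) \in orbit 'P G (Tagged A (m j))]].

Lemma orbit_matching_is_matching : is_matching orbit_matching.
Proof.
move=> i a; have [f in_orbit] := fin_all_exists (orbit_meets_fibre (Tagged A a)).
have f_i : f i = a.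
  exact: eq_from_Tagged (orbit_fibre_inj (in_orbit i) (orbit_refl 'P G _) erefl).
exists [ffun j => f j]; split.
  split; last by rewrite ffunE.
  rewrite inE; apply/forallP => j; apply/forallP => k; rewrite !ffunE.
  by move/orbit_eqP: (in_orbit j) => ->.
move=> m []; rewrite inE => /forallP m_orbit m_i; apply/ffunP => k; rewrite ffunE.
apply: eq_from_Tagged; apply: (orbit_fibre_inj (in_orbit k)) => //.
by rewrite -m_i; exact: (forallP (m_orbit i)).
Qed.

Lemma Mpi_orbit_matching g pi : g \in G -> induces g pi -> Mpi orbit_matching pi =1 g.
Proof.
move=> gG /forallP g_pi x.
have matchingM := orbit_matching_is_matching.
have [m mM ->] := matching_cover matchingM x.
rewrite Mpi_tuple //; apply: (@orbit_fibre_inj (Tagged A (m (tag x)))).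
- by move: mM; rewrite inE => /forallP/(_ (tag x))/forallP.
- exact: mem_orbit.
- by rewrite (eqP (g_pi _)).
Qed.

Definition induced_players : {set {perm N}} :=
  [set pi | [exists g in G, induces g pi]].

Lemma induced_players_groupset : group_set induced_players.
Proof.
apply/group_setP; split.
  by rewrite inE; apply/existsP; exists 1%g; rewrite group1; apply/forallP => x; rewrite !perm1.
move=> p q; rewrite !inE => /exists_inP[g gG /forallP g_p] /exists_inP[h hG /forallP h_q].
apply/exists_inP; exists (g * h)%g; rewrite ?groupM //; apply/forallP => x.
by rewrite !permM (eqP (h_q _)) (eqP (g_p _)).
Qed.

Canonical induced_players_group := group induced_players_groupset.

Variable d : forall i : N, A i.

Lemma induced_perm_exists g : g \in G -> exists pi, induces g pi.
Proof.
move=> gG; have f_inj : injective (fun i => tag (g (Tagged A (d i)))).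
  by move=> i j /(tag_perm_inj gG).
exists (perm f_inj); apply/forallP => x; rewrite permE.
by apply/eqP/gbij_tag; [exact: gbijG | case: x].
Qed.

Lemma induced_players_transitive (i0 : N) : [transitive induced_players, on [set: N] | 'P].
Proof.
apply/imsetP; exists i0 => //; apply/setP => j; rewrite in_setT; apply/esym/orbitP.
have [g gG to_j] := trG i0 j; have [pi /forallP g_pi] := induced_perm_exists gG.
exists pi; first by rewrite inE; apply/exists_inP; exists g => //; exact/forallP.
by rewrite /= -(to_j (d i0)) /gpl (eqP (g_pi _)).
Qed.

End OrbitMatching.

Lemma standard_symmetric_matching (N : finType) (A : N -> finType) u
    (d : forall i : N, A i) (i0 : N) :
  standard_symmetric u ->
  exists (M : {set {dffun forall i : N, A i}}) (H : {group {perm N}}),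
    [/\ is_matching M, [transitive H, on [set: N] | 'P] &
        forall pi, pi \in H -> is_aut u (Mpi M pi)].
Proof.
case=> G [symG trG stG]; have gbijG g : g \in G -> is_gbij g by case/symG.
exists (orbit_matching G), (induced_players_group G); split.
- exact: orbit_matching_is_matching.
- exact: induced_players_transitive.
move=> pi; rewrite inE => /exists_inP[g gG g_pi].
by rewrite (functional_extensionality _ _ (Mpi_orbit_matching gbijG trG stG gG g_pi)); exact: symG.
Qed.

Theorem mainTheorem11 (N : finType) (A : N -> finType)
  (u : forall i : N, (forall j : N, A j) -> Rdefinitions.R)
  (hN : 2 <= #|N|) (hA : forall i : N, 0 < #|A i|)
  (hAcard : forall i j : N, #|A i| = #|A j|) :
  standard_symmetric u <->
  exists (M : {set {dffun forall i : N, A i}}) (H : {group {perm N}}),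
    [/\ is_matching M, [transitive H, on [set: N] | 'P] &
        forall pi, pi \in H -> is_aut u (Mpi M pi)].
Proof.
split; last by case=> M [H [matchingM trH autH]]; exact: matching_standard_symmetric autH.
have [i0 _] := elimT card_gt0P (ltnW hN).
have [d _] := fin_all_exists (fun i => elimT card_gt0P (hA i)).
exact: standard_symmetric_matching.
Qed.
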